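(* Let $M\ni h$ be a positive definite lattice with a distinguished vector $h$, $h^2=3$, such that $h$ is characteristic in $M$ and $M$ contains an $h$-plane. Let $S=S(M)$ be the index-$3$ overlattice of $h^\perp\oplus\mathbb Z\hbar$ (with $h^\perp\subset M$ the orthogonal complement of $h$ and $\hbar^2=12$) obtained by adjoining $\tfrac13(3l-h+\hbar)$, where $l$ is any $h$-plane of $M$ (the result does not depend on the choice of $l$). Then: (1) $S$ is even and positive definite; (2) $\hbar\in 4S^\vee$; (3) the orthogonal complement of $\hbar$ in $S$ coincides with $h^\perp\subset M$; in particular their sets of roots (vectors of square $2$) coincide; (4) the map $x\mapsto\tfrac13(3x-h+\hbar)$ is a bijection between the $h$-planes of $M$ and the planes of $S$; (5) the same map is a bijection between the vectors $e\in M$ with $e^2=e\cdot h=1$ and the vectors $e\in S$ with $e^2=2$, $e\cdot\hbar=4$.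
   Context: A lattice is a free abelian group of finite rank with a symmetric bilinear form $x\cdot y$ valued in $\mathbb Z$; $L^\vee=\{x\in L\otimes\mathbb Q: x\cdot y\in\mathbb Z\ \forall y\in L\}$. A vector $v\in M$ is characteristic if $x^2\equiv x\cdot v\pmod 2$ for all $x\in M$. An $h$-plane in $M$ is a vector $l$ with $l^2=3$, $l\cdot h=1$. A plane in $S$ is a vector $l\in S$ with $l^2=l\cdot\hbar=4$. A lattice is even if $x^2\in2\mathbb Z$ for all $x$. *)

From HB Require Import structures.
From mathcomp Require Import all_boot all_order all_algebra.
Set Implicit Arguments. Unset Strict Implicit. Unset Printing Implicit Defensive.
Import Order.TTheory GRing.Theory Num.Theory.
Local Open Scope ring_scope.

(* A lattice M of rank n is Z^n (row vectors 'rV[int]_n) with the integral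
   symmetric bilinear bform given by the Gram matrix G. *)
Definition bform (n : nat) (G : 'M[int]_n) (x y : 'rV[int]_n) : int :=
  (x *m G *m y^T) 0 0.

Definition symmetric_gram (n : nat) (G : 'M[int]_n) : Prop := G^T = G.

Definition pos_def (n : nat) (G : 'M[int]_n) : Prop :=
  forall x : 'rV[int]_n, x != 0 -> 0 < bform G x x.

Definition is_characteristic (n : nat) (G : 'M[int]_n) (v : 'rV[int]_n) : Prop :=
  forall x : 'rV[int]_n, (2 %| bform G x x - bform G x v)%Z.

Definition hplane (n : nat) (G : 'M[int]_n) (h l : 'rV[int]_n) : Prop :=
  bform G l l = 3 /\ bform G l h = 1.

(* The ambient rational space  (M (x) Q) (+) Q hbar, with hbar^2 = 12. *)
Notation V n := (('rV[rat]_n * rat)%type) (only parsing).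

Definition ratmx (n : nat) (x : 'rV[int]_n) : 'rV[rat]_n :=
  map_mx (fun z : int => (z%:~R : rat)) x.

Definition formV (n : nat) (G : 'M[int]_n) (u v : V n) : rat :=
  (u.1 *m map_mx (fun z : int => (z%:~R : rat)) G *m v.1^T) 0 0
  + 12 * u.2 * v.2.

Definition addV (n : nat) (u v : V n) : V n := (u.1 + v.1, u.2 + v.2).
Definition oppV (n : nat) (u : V n) : V n := (- u.1, - u.2).
Definition scaleV (n : nat) (c : rat) (u : V n) : V n := (c *: u.1, c * u.2).

Definition embM (n : nat) (x : 'rV[int]_n) : V n := (ratmx x, 0).

Definition hbar (n : nat) : V n := (0, 1).

Definition phi (n : nat) (h x : 'rV[int]_n) : V n :=
  scaleV 3^-1 (addV (addV (scaleV 3 (embM x)) (oppV (embM h))) (hbar n)).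

Definition inS (n : nat) (G : 'M[int]_n) (h l : 'rV[int]_n) (v : V n) : Prop :=
  exists (x : 'rV[int]_n) (a b : int),
    bform G x h = 0 /\ v = addV (addV (embM x) (scaleV a%:~R (hbar n))) (scaleV b%:~R (phi h l)).

(* S^vee, inside S (x) Q = the whole ambient space (S has full rank). *)
Definition dualS (n : nat) (G : 'M[int]_n) (h l : 'rV[int]_n) (v : V n) : Prop :=
  forall w, inS G h l w -> exists k : int, formV G v w = k%:~R.

Definition planeS (n : nat) (G : 'M[int]_n) (h l : 'rV[int]_n) (s : V n) : Prop :=
  inS G h l s /\ formV G s s = 4 /\ formV G s (hbar n) = 4.

From HB Require Import structures.
From mathcomp Require Import all_boot all_order all_algebra.
From mathcomp Require Import zify ring lra.
Import Order.TTheory GRing.Theory Num.Theory.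
Set Implicit Arguments. Unset Strict Implicit.
Local Open Scope ring_scope.

(* Write c(z) = z.h for z in M and consider the map
     psi : M -> (M (x) Q) (+) Q hbar,   psi(z) = z - c(z)/3 h + c(z)/3 hbar.
   1. If l is an h-plane, then S is exactly the image of psi: an element
      x + a hbar + b (l - h/3 + hbar/3) with x in h^perp is psi(x + b l + a h),
      and conversely psi(z) is obtained from x = z - c(z) l, a = 0, b = c(z).
      (In particular S does not depend on l.)
   2. psi is an isometry from M with the modified form z.w + c(z) c(w) onto S,
      and psi(z).hbar = 4 c(z); moreover psi(z) = z when c(z) = 0 and
      psi(z) = (1/3)(3z - h + hbar) when c(z) = 1.
   All five claims then reduce to integer statements about z in M:
   (1) z^2 + c(z)^2 is even because h is characteristic, and positive for
   z <> 0; (2) hbar/4 pairs with psi(z) to c(z); (3) psi(z) is orthogonal to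
   hbar iff c(z) = 0; (4)-(5) psi(z).hbar = 4 forces c(z) = 1, and then
   psi(z)^2 = z^2 + 1, so vectors with z.h = 1 and z^2 = k correspond to
   vectors of S with square k + 1 and product 4 with hbar. *)

Definition formQ (n : nat) (G : 'M[int]_n) (u w : 'rV[rat]_n) : rat :=
  (u *m map_mx (fun z : int => (z%:~R : rat)) G *m w^T) 0 0.

Section Forms.
Variables (n : nat) (G : 'M[int]_n).

Lemma bformDl x y w : bform G (x + y) w = bform G x w + bform G y w.
Proof. by rewrite /bform !mulmxDl mxE. Qed.

Lemma bformZl a x w : bform G (a *: x) w = a * bform G x w.
Proof. by rewrite /bform -!scalemxAl mxE. Qed.

Lemma bformBl x y w : bform G (x - y) w = bform G x w - bform G y w.
Proof. by rewrite -scaleN1r bformDl bformZl mulN1r. Qed.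

Lemma formQDl u v w : formQ G (u + v) w = formQ G u w + formQ G v w.
Proof. by rewrite /formQ !mulmxDl mxE. Qed.

Lemma formQDr u v w : formQ G u (v + w) = formQ G u v + formQ G u w.
Proof. by rewrite /formQ linearD /= mulmxDr mxE. Qed.

Lemma formQZl a u w : formQ G (a *: u) w = a * formQ G u w.
Proof. by rewrite /formQ -!scalemxAl mxE. Qed.

Lemma formQZr a u w : formQ G u (a *: w) = a * formQ G u w.
Proof. by rewrite /formQ linearZ /= -scalemxAr mxE. Qed.

Lemma formQNl u w : formQ G (- u) w = - formQ G u w.
Proof. by rewrite -scaleN1r formQZl mulN1r. Qed.

Lemma formQNr u w : formQ G u (- w) = - formQ G u w.
Proof. by rewrite -scaleN1r formQZr mulN1r. Qed.

Lemma formQ0l w : formQ G 0 w = 0.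
Proof. by rewrite /formQ !mul0mx mxE. Qed.

Lemma formQ0r u : formQ G u 0 = 0.
Proof. by rewrite /formQ trmx0 mulmx0 mxE. Qed.

Lemma formQ_ratmx x y : formQ G (ratmx x) (ratmx y) = (bform G x y)%:~R.
Proof.
rewrite /formQ /ratmx.
change (fun z : int => (z%:~R : rat)) with (@intmul rat 1).
by rewrite map_trmx -!map_mxM /map_mx mxE.
Qed.

Lemma formVE u v : formV G u v = formQ G u.1 v.1 + 12 * u.2 * v.2.
Proof. by []. Qed.

Lemma formV_embM x y : formV G (embM x) (embM y) = (bform G x y)%:~R.
Proof. by rewrite formVE /= formQ_ratmx mulr0 addr0. Qed.

Lemma bformC : symmetric_gram G -> forall x y, bform G x y = bform G y x.
Proof.
move=> symG x y; rewrite /bform.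
have -> : (y *m G *m x^T) 0 0 = ((y *m G *m x^T)^T) 0 0 by rewrite /trmx mxE.
by rewrite !trmx_mul trmxK symG mulmxA.
Qed.

End Forms.

Lemma pairE (A B : Type) (u v : A * B) : u.1 = v.1 -> u.2 = v.2 -> u = v.
Proof. by case: u; case: v => ? ? ? ? /= -> ->. Qed.

Definition embS (n : nat) (G : 'M[int]_n) (h z : 'rV[int]_n) : V n :=
  (ratmx z - ((bform G z h)%:~R / 3) *: ratmx h, (bform G z h)%:~R / 3).

Section Embedding.
Variables (n : nat) (G : 'M[int]_n) (h : 'rV[int]_n).
Hypothesis hh : bform G h h = 3.

Lemma inS_embS l : bform G l h = 1 ->
  forall v, inS G h l v <-> exists z, v = embS G h z.
Proof.
move=> lh v; split.
- case=> x [a [b [xh ->]]]; exists (x + b *: l + a *: h).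
  have zh : bform G (x + b *: l + a *: h) h = b + a * 3.
    by rewrite !(bformDl, bformZl) xh lh hh add0r mulr1.
  apply: pairE; rewrite /embS zh /=.
    by apply/rowP => j; rewrite /ratmx !mxE !(rmorphD, rmorphM) /=; field.
  by rewrite !(rmorphD, rmorphM) /=; field.
- case=> z ->; exists (z - (bform G z h) *: l), 0, (bform G z h); split.
    by rewrite bformBl bformZl lh mulr1 subrr.
  apply: pairE; rewrite /embS /=.
    by apply/rowP => j; rewrite /ratmx !mxE !(rmorphB, rmorphM) /=; field.
  by field.
Qed.

Lemma formV_embS : symmetric_gram G -> forall z w,
  formV G (embS G h z) (embS G h w)
  = (bform G z w + bform G z h * bform G w h)%:~R.
Proof.
move=> symG z w; rewrite formVE /embS /=.
rewrite !(formQDl, formQDr, formQNl, formQNr, formQZl, formQZr) !formQ_ratmx.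
by rewrite (bformC symG h w) hh !(rmorphD, rmorphM) /=; field.
Qed.

Lemma formV_embS_hbar z : formV G (embS G h z) (hbar n) = (4 * bform G z h)%:~R.
Proof. by rewrite formVE /= formQ0r rmorphM /=; field. Qed.

Lemma embS0 : embS G h 0 = 0.
Proof.
have z0 : bform G 0 h = 0 by rewrite /bform !mul0mx mxE.
apply: pairE; rewrite /embS z0 /= mul0r // scale0r subr0.
by apply/rowP => j; rewrite !mxE.
Qed.

Lemma embS_perp z : bform G z h = 0 -> embS G h z = embM z.
Proof.
move=> zh; apply: pairE; rewrite /embS zh /= ?mul0r //.
by rewrite scale0r subr0.
Qed.

Lemma phi_embS z : bform G z h = 1 -> phi h z = embS G h z.
Proof.
move=> zh; apply: pairE; rewrite /phi /embS zh /=.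
  by apply/rowP => j; rewrite /ratmx !mxE; field.
by field.
Qed.

End Embedding.

Lemma phi_inj (n : nat) (h : 'rV[int]_n) : injective (phi h).
Proof.
move=> x y /(congr1 fst) /rowP Exy; apply/rowP => j; apply: (@intr_inj rat).
by have := Exy j; rewrite /phi /ratmx !mxE /=; lra.
Qed.

Lemma dvd2_mul_succ (c : int) : (2 %| c * (c + 1))%Z.
Proof. by have [/dvdz_mulr | /dvdz_mull] : (2 %| c)%Z \/ (2 %| c + 1)%Z by lia. Qed.

Section ClaimsOnS.
Variables (n : nat) (G : 'M[int]_n) (h l : 'rV[int]_n).
Hypotheses (symG : symmetric_gram G) (pdG : pos_def G).
Hypotheses (hh : bform G h h = 3) (charh : is_characteristic G h).
Hypothesis lh : bform G l h = 1.

(* (1) S is even: psi(z)^2 = z^2 + (z.h)^2 = (z^2 - z.h) + (z.h)(z.h + 1). *)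
Lemma S_even v : inS G h l v -> exists k : int, formV G v v = (2 * k)%:~R.
Proof.
move=> /(inS_embS hh lh) [z ->]; rewrite formV_embS //.
have : (2 %| bform G z z + bform G z h * bform G z h)%Z.
  have -> : bform G z z + bform G z h * bform G z h
    = (bform G z z - bform G z h) + bform G z h * (bform G z h + 1) by ring.
  exact: rpredD (charh z) (dvd2_mul_succ _).
by case/dvdzP => k ->; exists k; rewrite mulrC.
Qed.

Lemma S_pos_def v : inS G h l v -> v != 0 -> 0 < formV G v v.
Proof.
move=> /(inS_embS hh lh) [z ->] nz; rewrite formV_embS // ltr0z.
have /pdG zz : z != 0 by apply: contraNneq nz => ->; rewrite embS0.
by rewrite ltr_wpDr // -expr2 sqr_ge0.
Qed.

(* (2) hbar/4 is in the dual of S: it pairs with psi(z) to z.h. *)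
Lemma quarter_hbar_dual : dualS G h l (0, 4^-1).
Proof.
move=> w /(inS_embS hh lh) [z ->]; exists (bform G z h).
by rewrite formVE /= formQ0l; field.
Qed.

Lemma hbar_quarter : hbar n = scaleV 4 (0, 4^-1).
Proof. by apply: pairE; rewrite /= ?scaler0 ?mulfV. Qed.

Lemma hbar_perp v : (inS G h l v /\ formV G v (hbar n) = 0) <->
  (exists x, bform G x h = 0 /\ v = embM x).
Proof.
split.
- case=> /(inS_embS hh lh) [z ->]; rewrite formV_embS_hbar => /eqP.
  rewrite intr_eq0 mulf_eq0 => /orP [//|/eqP zh].
  by exists z; rewrite embS_perp.
- case=> x [xh ->]; rewrite -(embS_perp xh); split.
    by apply/(inS_embS hh lh); exists x.
  by rewrite formV_embS_hbar xh mulr0.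
Qed.

Lemma hbar_perp_roots v :
  (inS G h l v /\ formV G v (hbar n) = 0 /\ formV G v v = 2) <->
  (exists x, bform G x h = 0 /\ bform G x x = 2 /\ v = embM x).
Proof.
split.
- case=> Sv [v0 v2]; have [x [xh ev]] := (hbar_perp v).1 (conj Sv v0).
  exists x; do !split => //; apply: (@intr_inj rat).
  by rewrite -formV_embM -ev.
- case=> x [xh [xx ev]]; have [Sv v0] := (hbar_perp v).2 (ex_intro _ x (conj xh ev)).
  by do !split => //; rewrite ev formV_embM xx.
Qed.

Lemma phi_level_into (k : int) x : bform G x x = k -> bform G x h = 1 ->
  [/\ inS G h l (phi h x), formV G (phi h x) (phi h x) = k%:~R + 1
    & formV G (phi h x) (hbar n) = 4].
Proof.
move=> xx xh; rewrite (phi_embS xh); split.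
- by apply/(inS_embS hh lh); exists x.
- by rewrite formV_embS // xx xh mulr1 rmorphD.
- by rewrite formV_embS_hbar xh.
Qed.

Lemma phi_level_onto (k : int) s : inS G h l s ->
  formV G s s = k%:~R + 1 -> formV G s (hbar n) = 4 ->
  exists x, [/\ bform G x x = k, bform G x h = 1 & phi h x = s].
Proof.
move=> /(inS_embS hh lh) [z ->]; rewrite formV_embS_hbar formV_embS //.
move=> s2 sh; have zh : bform G z h = 1.
  have /(@intr_inj rat) : (4 * bform G z h)%:~R = 4%:~R :> rat by exact: sh.
  lia.
exists z; split => //; last exact: phi_embS.
by apply: (@intr_inj rat); apply: (addIr 1); rewrite -s2 zh mulr1 rmorphD.
Qed.

End ClaimsOnS.

Theorem proposition3p1 (n : nat) (G : 'M[int]_n) (h l : 'rV[int]_n) :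
  symmetric_gram G -> pos_def G ->
  bform G h h = 3 -> is_characteristic G h ->
  hplane G h l ->
  (* (1) S is even and positive definite *)
  ((forall v, inS G h l v -> exists k : int, formV G v v = (2 * k)%:~R) /\
   (forall v, inS G h l v -> v != 0 -> 0 < formV G v v)) /\
  (* (2) hbar in 4 S^vee *)
  (exists y, dualS G h l y /\ hbar n = scaleV 4 y) /\
  (* (3) hbar^perp in S = h^perp in M, and the roots coincide *)
  (forall v, (inS G h l v /\ formV G v (hbar n) = 0) <->
             (exists x, bform G x h = 0 /\ v = embM x)) /\
  (forall v, (inS G h l v /\ formV G v (hbar n) = 0 /\ formV G v v = 2) <->
             (exists x, bform G x h = 0 /\ bform G x x = 2 /\ v = embM x)) /\
  (* (4) x |-> (1/3)(3x - h + hbar): h-planes of M <-> planes of S *)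
  ((forall x, hplane G h x -> planeS G h l (phi h x)) /\
   (forall x y, hplane G h x -> hplane G h y -> phi h x = phi h y -> x = y) /\
   (forall s, planeS G h l s -> exists x, hplane G h x /\ phi h x = s)) /\
  (* (5) {e in M | e^2 = e.h = 1} <-> {e in S | e^2 = 2, e.hbar = 4} *)
  ((forall x, bform G x x = 1 -> bform G x h = 1 ->
      inS G h l (phi h x) /\ formV G (phi h x) (phi h x) = 2 /\
      formV G (phi h x) (hbar n) = 4) /\
   (forall x y, bform G x x = 1 -> bform G x h = 1 ->
      bform G y y = 1 -> bform G y h = 1 -> phi h x = phi h y -> x = y) /\
   (forall s, inS G h l s -> formV G s s = 2 -> formV G s (hbar n) = 4 ->
      exists x, bform G x x = 1 /\ bform G x h = 1 /\ phi h x = s)).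
Proof.
move=> symG pdG hh charh [_ lh].
have into := phi_level_into symG hh lh; have onto := phi_level_onto symG hh lh.
split; first by split; [exact: S_even | exact: S_pos_def].
split; first by exists (0, 4^-1); split; [exact: quarter_hbar_dual | exact: hbar_quarter].
split; first exact: hbar_perp.
split; first exact: hbar_perp_roots.
split; split; [| split | | split].
- by move=> x [xx xh]; have [] := into 3 x xx xh.
- by move=> x y _ _; exact: phi_inj.
- by move=> s [Ss [s2 sh]]; have [x [xx xh <-]] := onto 3 s Ss s2 sh; exists x.
- by move=> x xx xh; have [] := into 1 x xx xh.
- by move=> x y _ _ _ _; exact: phi_inj.
- by move=> s Ss s2 sh; have [x [xx xh <-]] := onto 1 s Ss s2 sh; exists x.
Qed.
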